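(* Let $\mathbb F$ be algebraically closed with $\operatorname{char}\mathbb F\ne2$, and let $a,b,c,\nu\in\mathbb F$. There exists an $\Re$-module $M_\nu(a,b,c)$ with an $\mathbb F$-basis $\{m_i\}_{i=0}^\infty$ such that $Am_i=\theta_im_i+m_{i+1}$ for all $i\ge0$, $Bm_0=\theta_0^*m_0$, $Bm_i=\theta_i^*m_i+\varphi_im_{i-1}$ for all $i\ge1$, and on which $\alpha,\beta,\delta$ act as scalar multiplication by $\zeta,\zeta^*,\eta$, respectively.
   Context: The Racah algebra $\Re$ is the unital associative $\mathbb F$-algebra with generators $A,B,C,D$ and relations $[A,B]=[B,C]=[C,A]=2D$ together with the requirement that each of $\alpha:=[A,D]+AC-BA$, $\beta:=[B,D]+BA-CB$, $\gamma:=[C,D]+CB-AC$ is central in $\Re$; $\delta:=A+B+C$. For $a,b,c,\nu\in\mathbb F$ and $i\in\mathbb Z$: $\theta_i=(a+\tfrac\nu2-i)(a+\tfrac\nu2-i+1)$, $\theta_i^*=(b+\tfrac\nu2-i)(b+\tfrac\nu2-i+1)$, $\varphi_i=i(i-\nu-1)(a+b+c+\tfrac\nu2-i+2)(a+b-c+\tfrac\nu2-i+1)$, $\zeta=(c-b)(c+b+1)(a-\tfrac\nu2)(a+\tfrac\nu2+1)$, $\zeta^*=(a-c)(a+c+1)(b-\tfrac\nu2)(b+\tfrac\nu2+1)$, $\eta=\tfrac\nu2(\tfrac\nu2+1)+a(a+1)+b(b+1)+c(c+1)$. *)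

From HB Require Import structures.
From mathcomp Require Import all_boot all_order all_algebra.
Set Implicit Arguments. Unset Strict Implicit. Unset Printing Implicit Defensive.
Import Order.TTheory GRing.Theory Num.Theory.
Local Open Scope ring_scope.

Section Racah.
Variable F : fieldType.

Definition rc_theta (a nu : F) (i : nat) : F :=
  (a + nu / 2%:R - i%:R) * (a + nu / 2%:R - i%:R + 1).
Definition rc_thetas (b nu : F) (i : nat) : F :=
  (b + nu / 2%:R - i%:R) * (b + nu / 2%:R - i%:R + 1).
Definition rc_phi (a b c nu : F) (i : nat) : F :=
  i%:R * (i%:R - nu - 1) * (a + b + c + nu / 2%:R - i%:R + 2%:R)
  * (a + b - c + nu / 2%:R - i%:R + 1).
Definition rc_zeta (a b c nu : F) : F :=
  (c - b) * (c + b + 1) * (a - nu / 2%:R) * (a + nu / 2%:R + 1).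
Definition rc_zetas (a b c nu : F) : F :=
  (a - c) * (a + c + 1) * (b - nu / 2%:R) * (b + nu / 2%:R + 1).
Definition rc_eta (a b c nu : F) : F :=
  nu / 2%:R * (nu / 2%:R + 1) + a * (a + 1) + b * (b + 1) + c * (c + 1).

Variable V : lmodType F.

Definition ralpha (A B C D : V -> V) (v : V) : V :=
  A (D v) - D (A v) + A (C v) - B (A v).
Definition rbeta (A B C D : V -> V) (v : V) : V :=
  B (D v) - D (B v) + B (A v) - C (B v).
Definition rgamma (A B C D : V -> V) (v : V) : V :=
  C (D v) - D (C v) + C (B v) - A (C v).

Definition commutes_with_gens (A B C D X : V -> V) : Prop :=
  forall v, [/\ X (A v) = A (X v), X (B v) = B (X v),
                X (C v) = C (X v) & X (D v) = D (X v)].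

Definition racah_module (A B C D : {linear V -> V}) : Prop :=
  [/\ forall v, A (B v) - B (A v) = D v *+ 2,
      forall v, B (C v) - C (B v) = D v *+ 2,
      forall v, C (A v) - A (C v) = D v *+ 2 &
      [/\ commutes_with_gens A B C D (ralpha A B C D),
      commutes_with_gens A B C D (rbeta A B C D) &
      commutes_with_gens A B C D (rgamma A B C D)]].

Definition is_basis (m : nat -> V) : Prop :=
  (forall (n : nat) (k : nat -> F),
      \sum_(i < n) k i *: m i = 0 -> forall i, (i < n)%N -> k i = 0)
  /\ (forall v : V, exists (n : nat) (k : nat -> F), v = \sum_(i < n) k i *: m i).

End Racah.

From HB Require Import structures.
From mathcomp Require Import all_boot all_order all_algebra.
From mathcomp Require Import ring.
Import GRing.Theory.
Set Implicit Arguments.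
Unset Strict Implicit.
Unset Printing Implicit Defensive.
Local Open Scope ring_scope.

(* The module is F[X] with m_i = X^i: A acts as the lower bidiagonal operator
   X^i |-> theta_i X^i + X^(i+1) and B as the upper bidiagonal operator
   X^i |-> theta*_i X^i + phi_i X^(i-1), while C := eta - A - B and
   D := [A, B]/2 are forced by delta = eta and [A, B] = 2D.  With these
   definitions [B, C] = [C, A] = 2D hold in any module, and
   alpha + beta + gamma = [A + B + C, D] = 0, so the Racah relations reduce to
   alpha and beta acting as the scalars zeta and zeta*.  That is a
   coefficientwise polynomial identity in a, b, c, nu. *)

Lemma commutes_with_gens_scale (F : fieldType) (V : lmodType F)
    (A B C D : {linear V -> V}) (X : V -> V) (k : F) :
  (forall v, X v = k *: v) -> commutes_with_gens A B C D X.
Proof. by move=> Xk v; rewrite !Xk !linearZ. Qed.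

Section RacahCompletion.
Variables (F : fieldType) (V : lmodType F) (A B : {linear V -> V}) (eta : F).

Definition racah_C : V -> V := eta \*: idfun \- A \- B.
Definition racah_D : V -> V := 2%:R^-1 \*: ((A \o B) \- (B \o A)).
HB.instance Definition _ := GRing.Linear.on racah_C.
HB.instance Definition _ := GRing.Linear.on racah_D.

Local Notation C := (racah_C : {linear V -> V}).
Local Notation D := (racah_D : {linear V -> V}).

Lemma racah_CE v : C v = eta *: v - A v - B v. Proof. by []. Qed.
Lemma racah_DE v : D v = 2%:R^-1 *: (A (B v) - B (A v)). Proof. by []. Qed.

Lemma racah_sumE v : A v + B v + C v = eta *: v.
Proof. by rewrite racah_CE -[eta *: v - _ - _]addrA -opprD addrC addNKr. Qed.

Hypothesis two_neq0 : (2%:R : F) != 0.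

Lemma racah_commAB v : A (B v) - B (A v) = D v *+ 2.
Proof. by rewrite racah_DE -scaler_nat scalerA mulfV // scale1r. Qed.

Lemma racah_commBC v : B (C v) - C (B v) = D v *+ 2.
Proof.
rewrite -racah_commAB !racah_CE !linearB linearZ /= !opprK.
by rewrite addrACA addNr addr0 addrACA subrr add0r addrC.
Qed.

Lemma racah_commCA v : C (A v) - A (C v) = D v *+ 2.
Proof.
rewrite -racah_commAB !racah_CE !linearB linearZ /= !opprK.
by rewrite addrACA [X in X + _]addrACA subrr addNr !add0r addrC.
Qed.

Lemma racah_casimir_sum v :
  ralpha A B C D v + rbeta A B C D v + rgamma A B C D v = 0.
Proof.
rewrite /ralpha /rbeta /rgamma.
rewrite (AC ((4*4)*4) (((1*5*9)*(2*6*10))*((3*12)*(4*7)*(8*11)))) /=.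
rewrite racah_sumE -!opprD -!linearD racah_sumE [D (_ *: _)]linearZ.
by rewrite subrr !addNr subrr !add0r.
Qed.

Lemma racah_module_of_casimirs (z zs : F) :
  (forall v, ralpha A B C D v = z *: v) -> (forall v, rbeta A B C D v = zs *: v) ->
  racah_module A B C D.
Proof.
move=> alphaE betaE.
have gammaE v : rgamma A B C D v = - (z + zs) *: v.
  apply/eqP; rewrite scaleNr scalerDl -alphaE -betaE -addr_eq0 addrC.
  exact/eqP/racah_casimir_sum.
split; [exact: racah_commAB | exact: racah_commBC | exact: racah_commCA |].
by split; apply: commutes_with_gens_scale; [exact: alphaE | exact: betaE | exact: gammaE].
Qed.
End RacahCompletion.

Section DiagonalPoly.
Variable R : comNzRingType.

Definition diag_poly (f : nat -> R) (p : {poly R}) : {poly R} :=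
  \poly_(j < size p) (f j * p`_j).

Lemma coef_diag_poly f p j : (diag_poly f p)`_j = f j * p`_j.
Proof.
by rewrite coef_poly; case: ltnP => // /(nth_default 0)->; rewrite mulr0.
Qed.

Lemma diag_poly_is_linear f : linear (diag_poly f).
Proof.
by move=> k p q; apply/polyP => j; rewrite !(coefD, coefZ, coef_diag_poly) mulrDr mulrCA.
Qed.

HB.instance Definition _ f := GRing.isLinear.Build R {poly R} {poly R} *:%R
  (diag_poly f) (diag_poly_is_linear f).

Lemma diag_polyXn f i : diag_poly f 'X^i = f i *: 'X^i.
Proof.
apply/polyP => j; rewrite coef_diag_poly coefZ coefXn.
by case: eqP => [->|]; rewrite ?mulr0.
Qed.

End DiagonalPoly.

Lemma polyXn_basis (F : fieldType) : is_basis (fun i => 'X^i : {poly F}).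
Proof.
split=> [n k sum0 i lt_in | p].
  by have := congr1 (coefp i) sum0; rewrite /= -poly_def coef_poly lt_in coef0.
by exists (size p), (fun i => p`_i); rewrite -poly_def coefK.
Qed.

Section RacahPolyModel.
Variables (F : fieldType) (a b c nu : F).

Local Notation th := (rc_theta a nu).
Local Notation ths := (rc_thetas b nu).
Local Notation ph := (rc_phi a b c nu).

Definition racah_poly_A : {poly F} -> {poly F} := diag_poly th \+ 'X \o* idfun.
Definition racah_poly_B : {poly F} -> {poly F} :=
  diag_poly ths \+ (drop_poly 1 \o diag_poly ph).

HB.instance Definition _ := GRing.Linear.on racah_poly_A.
HB.instance Definition _ := GRing.Linear.on racah_poly_B.

Local Notation A := (racah_poly_A : {linear _ -> _}).
Local Notation B := (racah_poly_B : {linear _ -> _}).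

Lemma coef_racah_poly_A p j :
  (A p)`_j = th j * p`_j + (if j == 0%N then 0 else p`_j.-1).
Proof. by rewrite /racah_poly_A /= coefD coef_diag_poly coefMX. Qed.

Lemma coef_racah_poly_B p j : (B p)`_j = ths j * p`_j + ph j.+1 * p`_j.+1.
Proof. by rewrite /racah_poly_B /= coefD coef_drop_poly !coef_diag_poly addn1. Qed.

Lemma racah_poly_AXn i : A 'X^i = th i *: 'X^i + 'X^(i.+1).
Proof. by rewrite /= /racah_poly_A /= diag_polyXn exprSr. Qed.

Lemma rc_phi0 : ph 0 = 0.
Proof. by rewrite /rc_phi !mul0r. Qed.

Lemma racah_poly_BXn i : B 'X^i = ths i *: 'X^i + ph i *: 'X^(i.-1).
Proof.
rewrite /= /racah_poly_B /= !diag_polyXn linearZ /=; congr (_ + _).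
by case: i => [|i]; rewrite ?rc_phi0 ?scale0r // exprSr (drop_polyMXn_id 1).
Qed.

Hypothesis two_neq0 : (2%:R : F) != 0.

Local Notation C := (racah_C A B (rc_eta a b c nu) : {linear _ -> _}).
Local Notation D := (racah_D A B : {linear _ -> _}).

Ltac coef_field :=
  rewrite !(coef_racah_poly_A, coef_racah_poly_B, coefD, coefN, coefB, coefZ) /=;
  rewrite /rc_theta /rc_thetas /rc_phi /rc_zeta /rc_zetas /rc_eta;
  field; exact: two_neq0.

Lemma racah_poly_alphaE p : ralpha A B C D p = rc_zeta a b c nu *: p.
Proof.
apply/polyP => j; rewrite /ralpha !racah_CE !racah_DE.
by case: j => [|[|j]]; coef_field.
Qed.

Lemma racah_poly_betaE p : rbeta A B C D p = rc_zetas a b c nu *: p.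
Proof.
apply/polyP => j; rewrite /rbeta !racah_CE !racah_DE.
by case: j => [|[|j]]; coef_field.
Qed.
End RacahPolyModel.

Theorem proposition3p1 (F : closedFieldType) (a b c nu : F) :
  2 \notin [pchar F] ->
  exists (V : lmodType F) (A B C D : {linear V -> V}) (m : nat -> V),
    [/\ racah_module A B C D,
        is_basis m &
        [/\ forall i : nat, A (m i) = rc_theta a nu i *: m i + m i.+1,
        B (m 0%N) = rc_thetas b nu 0 *: m 0%N,
        forall i : nat, (1 <= i)%N ->
          B (m i) = rc_thetas b nu i *: m i + rc_phi a b c nu i *: m i.-1 &
        forall v : V,
          [/\ ralpha A B C D v = rc_zeta a b c nu *: v,
              rbeta A B C D v = rc_zetas a b c nu *: v &
              A v + B v + C v = rc_eta a b c nu *: v]]].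
Proof.
move=> pchar2; have two_neq0 : (2%:R : F) != 0 by apply: contra pchar2 => ?; rewrite inE.
exists {poly F}, (racah_poly_A a nu), (racah_poly_B a b c nu).
exists (racah_C (racah_poly_A a nu) (racah_poly_B a b c nu) (rc_eta a b c nu)).
exists (racah_D (racah_poly_A a nu) (racah_poly_B a b c nu)), (fun i => 'X^i).
split; last split.
- apply: (racah_module_of_casimirs two_neq0) => v;
    [exact: racah_poly_alphaE | exact: racah_poly_betaE].
- exact: polyXn_basis.
- exact: racah_poly_AXn.
- by rewrite racah_poly_BXn rc_phi0 scale0r addr0.
- by move=> i _; apply: racah_poly_BXn.
- move=> v; split; [exact: racah_poly_alphaE | exact: racah_poly_betaE | exact: racah_sumE].
Qed.
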